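(* Let $k\geq 1$ and let $T$ and $T'$ be binary phylogenetic $X$-trees with $|X|=2k$. Let $P_1,\ldots,P_k$ and $P'_1,\ldots,P'_k$ be the unique sets of $k$ pairwise edge-disjoint leaf-to-leaf paths in $T$ and $T'$, respectively. Let $\mathcal{E}=\{\{a_i,b_i\}: a_i,b_i \text{ are the endpoints of } P_i,\ 1\le i\le k\}$ and $\mathcal{E}'=\{\{a'_i,b'_i\}: a'_i,b'_i \text{ are the endpoints of } P'_i,\ 1\le i\le k\}$. Then $A_k(T)=A_k(T')$ if and only if $\mathcal{E}=\mathcal{E}'$.
   Context: A phylogenetic $X$-tree is a tree with no vertices of degree 2 whose leaves are bijectively labelled by (and identified with) $X$; binary means maximum degree 3. A leaf-to-leaf path is a path whose two endpoints are (distinct) leaves. When $|X|=2k$, a binary phylogenetic $X$-tree contains exactly one set of $k$ pairwise edge-disjoint leaf-to-leaf paths. For a binary character $f: X\to\{a,b\}$, $l(f,T)$ is the minimum, over all maps $g:V(T)\to\{a,b\}$ with $g|_X=f$, of the number of edges $\{u,v\}$ with $g(u)\ne g(v)$; $A_k(T)$ is the set of all binary characters $f$ on $X$ with $l(f,T)=k$. *)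

From mathcomp Require Import all_boot.
Set Implicit Arguments.
Unset Strict Implicit.
Unset Printing Implicit Defensive.

Section Defs.
Variables (V : finType) (e : rel V).

Definition deg (v : V) : nat := #|[set w | e v w]|.

Definition acyclic : Prop :=
  forall s : seq V, uniq s -> 2 < size s -> ~~ cycle e s.

Definition is_tree : Prop :=
  symmetric e /\ irreflexive e /\ (forall u v, connect e u v) /\ acyclic.

Definition edges : {set {set V}} := [set [set p.1; p.2] | p in [set p : (V * V)%type | e p.1 p.2]].
End Defs.

Definition is_binary_phylo (X V : finType) (e : rel V) (phi : X -> V) : Prop :=
  is_tree e /\ injective phi /\
  (forall v, (deg e v == 1) = (v \in codom phi)) /\
  (forall v, deg e v != 2) /\ (forall v, deg e v <= 3).

Record btree (X : finType) := BTree {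
  tV : finType;
  tE : rel tV;
  tphi : X -> tV;
  tP : is_binary_phylo tE tphi }.
Arguments tV {X} b : rename.
Arguments tE {X} b _ _ : rename.
Arguments tphi {X} b _ : rename.

Section Parsimony.
Variables (X : finType) (T : btree X).

Definition changes (g : {ffun tV T -> bool}) : nat :=
  #|[set [set p.1; p.2] | p in [set p : (tV T * tV T)%type | tE T p.1 p.2 && (g p.1 != g p.2)]]|.

(* l(f,T): minimum number of changes over all extensions g of f
   (binary states a,b encoded as true,false).  The default value #|edges|
   is an upper bound on every 'changes g', so it never affects the minimum. *)
Definition parsimony (f : {ffun X -> bool}) : nat :=
  \big[minn/#|edges (tE T)|]_(g : {ffun tV T -> bool} | [forall x, g (tphi T x) == f x])
     changes g.

Definition A_ (k : nat) : {set {ffun X -> bool}} := [set f | parsimony f == k].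

Definition leaf_path (x y : X) (s : seq (tV T)) : bool :=
  [&& x != y, path (tE T) (tphi T x) s, last (tphi T x) s == tphi T y
    & uniq (tphi T x :: s)].

Definition path_edges (v0 : tV T) (s : seq (tV T)) : {set {set tV T}} :=
  [set:: [seq [set p.1; p.2] | p <- zip (v0 :: s) s]].

Definition path_system (k : nat) (a b : 'I_k -> X) (s : 'I_k -> seq (tV T)) : Prop :=
  (forall i, leaf_path (a i) (b i) (s i)) /\
  (forall i j, i != j ->
     [disjoint path_edges (tphi T (a i)) (s i) & path_edges (tphi T (a j)) (s j)]).

Definition endpoint_pairs (k : nat) (a b : 'I_k -> X) : {set {set X}} :=
  [set [set a i; b i] | i : 'I_k].
End Parsimony.
Arguments path_system {X} T {k} a b s.
Arguments leaf_path {X} T x y s.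

(* A character lies in [A_k(T)] iff it separates every endpoint pair
   {a_i, b_i}.  If it does, each of the k edge-disjoint paths carries its own
   change edge, while [l(f,T) <= k] for every character (recolour the minority
   leaves).  If it does not separate {a_i, b_i} and is balanced, the imbalance
   (#true - #false leaves) of the side of each edge of P_i containing a_i is
   odd and goes from +-1 to -+1; so either some edge cuts off a branch of
   imbalance at least 2 in absolute value, or the sign flips at an interior
   vertex whose third branch then has imbalance +-2.  Colouring that branch by
   its majority state and the rest by the other one gives
   [l(f,T) <= 1 + (k - 2)].  Finally, the characters separating every pair of
   a perfect matching determine the matching. *)

From mathcomp Require Import all_boot ssralg ssrnum ssrint zify.
Set Implicit Arguments.
Unset Strict Implicit.
Unset Printing Implicit Defensive.
Import GRing.Theory Num.Theory.

Lemma connect_uniq_path (V : finType) (r : rel V) x y :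
  connect r x y -> exists p, [/\ path r x p, uniq (x :: p) & last x p = y].
Proof.
move/connectP=> [p pp ->]; case: (shortenP pp) => p' pp' up' _.
by exists p'; split.
Qed.

Lemma bigmin_le (I : eqType) (r : seq I) (P : pred I) (F : I -> nat) idx i0 :
  i0 \in r -> P i0 -> \big[minn/idx]_(i <- r | P i) F i <= F i0.
Proof.
elim: r => [//|j r IH]; rewrite inE big_cons => /orP [/eqP <- ->|ir Pi].
  exact: geq_minl.
case: (P j); last exact: IH.
exact: leq_trans (geq_minr _ _) (IH ir Pi).
Qed.

Lemma mem_zip_nth (T : eqType) (x0 x : T) p t : t < size p ->
  (nth x0 (x :: p) t, nth x0 p t) \in zip (x :: p) p.
Proof.
elim: p x t => [//|y p IH] x [|t] /= ht; first by rewrite inE eqxx.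
by rewrite inE IH ?orbT.
Qed.

Lemma natr_card_set (T : finType) (P : pred T) :
  (#|[set x | P x]|%:R : int) = (\sum_x (if P x then 1 else 0))%R.
Proof.
rewrite -sum1_card natr_sum big_mkcond /=; apply: eq_bigr => x _.
by rewrite inE; case: (P x).
Qed.

Lemma sign_change (q : nat -> int) (sg : int) n : (sg = 1 \/ sg = -1)%R ->
  q 0 = sg -> q n = (- sg)%R -> (forall t, t <= n -> q t = 1%R \/ q t = (-1)%R) ->
  exists t, [/\ t < n, q t = sg & q t.+1 = (- sg)%R].
Proof.
move=> hsg q0; elim: n => [|n IH] qn hq; first by rewrite q0 in qn; lia.
have [qs|qs] : q n = sg \/ q n = (- sg)%R by have := hq n (leqnSn n); lia.
  by exists n; split.
have [t [tn h1 h2]] := IH qs (fun t ht => hq t (leqW ht)).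
by exists t; split=> //; apply: leqW.
Qed.

Section Matching.
Variables (X : finType) (k : nat).

Definition perfect_matching (a b : 'I_k -> X) : Prop :=
  [/\ forall i, a i != b i,
      forall z, exists i, z \in [set a i; b i]
    & forall z i j, z \in [set a i; b i] -> z \in [set a j; b j] -> i = j].

Definition separates (f : X -> bool) (a b : 'I_k -> X) : bool :=
  [forall i, f (a i) != f (b i)].

Lemma separatesE (f : X -> bool) (a b : 'I_k -> X) :
  separates f a b = [forall E in endpoint_pairs a b, #|f @: E| == 2].
Proof.
have sepE x y : (f x != f y) = (#|f @: [set x; y]| == 2).
  by rewrite imsetU1 imset_set1 cards2; case: (_ != _).
apply/forallP/forall_inP => [h _ /imsetP [i _ ->]|h i]; first by rewrite -sepE.
by rewrite sepE; apply: h; apply/imsetP; exists i.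
Qed.

Lemma perfect_matching_sum (R : nmodType) (a b : 'I_k -> X) (F : X -> R) :
  perfect_matching a b -> (\sum_x F x = \sum_i (F (a i) + F (b i)))%R.
Proof.
case=> ab cover uniq_ab; have [J hJ] := fin_all_exists cover.
rewrite (partition_big J predT) //=; apply: eq_bigr => i _.
rewrite (eq_bigl (mem [set a i; b i])) => [|x].
  by rewrite big_setU1 ?big_set1 //= inE.
apply/eqP/idP => [<-|/(uniq_ab _ _ _ (hJ x))//]; exact: hJ.
Qed.

(* If [{a i, b i}] is not a pair of [(a', b')], colour it [true], the other
   ends of the [(a', b')]-pairs through it [false], and split every remaining
   [(a', b')]-pair: this separates [(a', b')] but not [(a, b)]. *)
Lemma endpoint_pairs_sub (a b a' b' : 'I_k -> X) : perfect_matching a' b' ->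
  (forall f : {ffun X -> bool}, separates f a' b' -> separates f a b) ->
  endpoint_pairs a b \subset endpoint_pairs a' b'.
Proof.
case=> ab' cover' uniq' hsep; apply/subsetP => _ /imsetP [i _ ->].
apply/negPn/negP => notE.
have [J hJ] := fin_all_exists cover'.
have Ja j : J (a' j) = j by apply: uniq' (hJ _) _; rewrite set21.
have Jb j : J (b' j) = j by apply: uniq' (hJ _) _; rewrite set22.
set P := [set a i; b i].
pose f := [ffun x => if J x \in [set J (a i); J (b i)] then x \in P else x == a' (J x)].
suff /hsep/forallP/(_ i) : separates f a' b' by rewrite !ffunE !set21 !set22.
apply/forallP => j; rewrite !ffunE Ja Jb; case: ifP => [hj|_]; last first.
  by rewrite eqxx (eq_sym (b' j)) (negbTE (ab' j)).
have one : (a' j \in P) || (b' j \in P).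
  by case/set2P: hj => ->; [move: (hJ (a i)) | move: (hJ (b i))];
    case/set2P => <-; rewrite /P ?set21 ?set22 ?orbT.
have notboth : ~~ ((a' j \in P) && (b' j \in P)).
  apply: contra notE => /andP [aP bP]; apply/imsetP; exists j => //.
  apply/eqP; rewrite eq_sym eqEcard subUset !sub1set aP bP (cards2 (a' j)) ab'.
  by rewrite /P cards2; case: (_ != _).
by move: one notboth; case: (a' j \in P); case: (b' j \in P).
Qed.

End Matching.

Section Tree.
Variables (X : finType) (T : btree X).
Local Notation V := (tV T).
Local Notation e := (tE T).
Local Notation phi := (tphi T).

Lemma tE_sym : symmetric e. Proof. by case: (tP T) => [[]]. Qed.
Lemma tE_irr : irreflexive e. Proof. by case: (tP T) => [[_ []]]. Qed.
Lemma tE_connect u v : connect e u v. Proof. by case: (tP T) => [[_ [_ []]]]. Qed.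
Lemma tE_acyclic : acyclic e. Proof. by case: (tP T) => [[_ [_ [_]]]]. Qed.
Lemma tphi_inj : injective phi. Proof. by case: (tP T) => _ []. Qed.
Lemma deg_eq1 v : (deg e v == 1) = (v \in codom phi).
Proof. by case: (tP T) => _ [_ []]. Qed.
Lemma deg_neq2 v : deg e v != 2. Proof. by case: (tP T) => _ [_ [_ []]]. Qed.
Lemma deg_le3 v : deg e v <= 3. Proof. by case: (tP T) => _ [_ [_ []]]. Qed.

Lemma tE_neq u w : e u w -> u != w.
Proof. by apply: contraTneq => ->; rewrite tE_irr. Qed.

Lemma deg_leaf x : deg e (phi x) = 1.
Proof. by apply/eqP; rewrite deg_eq1 codom_f. Qed.

Lemma deg1_nbr_uniq v w1 w2 : deg e v = 1 -> e v w1 -> e v w2 -> w1 = w2.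
Proof.
rewrite /deg => /eqP/cards1P [z hz] h1 h2.
have: w1 \in [set w | e v w] by rewrite inE.
have: w2 \in [set w | e v w] by rewrite inE.
by rewrite hz !inE => /eqP -> /eqP ->.
Qed.

Lemma leaf_nbr_uniq x w1 w2 : e (phi x) w1 -> e (phi x) w2 -> w1 = w2.
Proof. exact: deg1_nbr_uniq (deg_leaf x). Qed.

Definition avoid (u : V) : rel V := [rel x y | [&& e x y, x != u & y != u]].
Definition branch (u w : V) : {set V} := [set y | connect (avoid u) w y].

Lemma avoidE u x y : avoid u x y = [&& e x y, x != u & y != u]. Proof. by []. Qed.

Lemma avoid_sym u : symmetric (avoid u).
Proof. by move=> x y; rewrite /avoid /= tE_sym; case: (e y x) (x != u) (y != u) => [] [] []. Qed.

Lemma path_avoid u x p : path (avoid u) x p -> path e x p.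
Proof. by apply: sub_path => ? ? /andP []. Qed.

Lemma path_avoid_notin u x p : path (avoid u) x p -> u \notin p.
Proof.
elim: p x => [//|y p IH] x /= /andP [/and3P [_ _ yu] pp].
by rewrite inE negb_or eq_sym yu (IH _ pp).
Qed.

Lemma path_avoidI u x p : path e x p -> x != u -> u \notin p -> path (avoid u) x p.
Proof.
elim: p x => [//|y p IH] x /= /andP [exy pp] xu; rewrite inE negb_or => /andP [uy up].
by rewrite /= avoidE exy xu eq_sym uy IH // eq_sym.
Qed.

Lemma branch_root u w : w \in branch u w.
Proof. by rewrite inE connect0. Qed.

Lemma branch_notin u w : e u w -> u \notin branch u w.
Proof.
move=> euw; rewrite inE; apply/negP => /connectP [[|y p] pp def].
  by move: (tE_neq euw); rewrite def eqxx.
by have := path_avoid_notin pp; rewrite def /= mem_last.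
Qed.

Lemma branch_neq u w y : e u w -> y \in branch u w -> y != u.
Proof. by move=> euw; apply: contraTneq => ->; apply: branch_notin. Qed.

(* Two branches at [u] sharing a vertex would close a cycle through [u]. *)
Lemma branch_disj u w1 w2 y : e u w1 -> e u w2 -> w1 != w2 ->
  y \in branch u w1 -> (y \in branch u w2) = false.
Proof.
move=> e1 e2 n12; rewrite !inE => c1; apply/negP => c2.
have c12 : connect (avoid u) w1 w2.
  by apply: connect_trans c1 _; rewrite (sym_connect_sym (@avoid_sym u)).
have [p [pp up lp]] := connect_uniq_path c12.
have pn : p != [::] by case: p pp up lp => [/= _ _ h|//]; move: n12; rewrite h eqxx.
have := @tE_acyclic (u :: w1 :: p).
have -> : uniq (u :: w1 :: p).
  by rewrite cons_uniq up andbT inE negb_or (tE_neq e1) /= (path_avoid_notin pp).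
have -> : 2 < size (u :: w1 :: p) by case: p pn {pp up lp}.
by rewrite /= rcons_path e1 (path_avoid pp) lp tE_sym e2 => /(_ isT isT).
Qed.

Lemma branch_cover u y : y != u -> exists2 w, e u w & y \in branch u w.
Proof.
move=> yu; have [[|w p] [pp up lp]] := connect_uniq_path (tE_connect u y).
  by move: yu; rewrite -lp eqxx.
move: pp up => /= /andP [euw pp]; rewrite inE negb_or => /andP [/andP [uw up] _].
exists w => //; rewrite inE; apply/connectP; exists p => //.
by apply: path_avoidI => //; rewrite eq_sym.
Qed.

Lemma branch_leaf w l y : e w l -> deg e l = 1 -> y \in branch w l -> y = l.
Proof.
move=> ewl dl; rewrite inE => /connectP [[|z p] //= /andP [/and3P [elz lw zw] _] _].
have zw' : z = w by apply: deg1_nbr_uniq dl elz _; rewrite tE_sym.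
by rewrite zw' eqxx in zw.
Qed.

Lemma branch_exit u w y y' : e u w -> y \in branch u w -> e y y' ->
  y' \notin branch u w -> y = w /\ y' = u.
Proof.
move=> euw yB eyy' y'B.
have yu := branch_neq euw yB.
have y'u : y' = u.
  apply/eqP; apply: contraNT y'B => y'u; move: yB; rewrite !inE => c.
  by apply: connect_trans c (connect1 _); rewrite avoidE eyy' yu y'u.
split=> //; apply/eqP; apply: contraNT y'B => yw; exfalso.
have euy : e u y by rewrite -y'u tE_sym.
by rewrite (branch_disj euy euw yw (branch_root u y)) in yB.
Qed.

Lemma branchC u w y : e u w -> (y \in branch u w) = (y \notin branch w u).
Proof.
move=> euw; apply/idP/idP => [yB|ynB].
  apply/negP; rewrite inE => /connect_uniq_path [[|w' p] [pp up lp]].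
    by move: (branch_neq euw yB); rewrite -lp eqxx.
  move: pp up => /= /andP [/and3P [euw' _ w'w] pp].
  rewrite inE negb_or => /andP [/andP [uw' up] _].
  have yB' : y \in branch u w'.
    rewrite inE; apply/connectP; exists p => //.
    by apply: path_avoidI (path_avoid pp) _ _; rewrite // eq_sym.
  by rewrite (branch_disj euw' euw w'w yB') in yB.
have [yu|yu] := eqVneq y u; first by move: ynB; rewrite yu branch_root.
have [w' euw' yB'] := branch_cover yu.
have [<-//|w'w] := eqVneq w' w.
move: yB'; rewrite inE => /connectP [p pp lp].
have pw z : z \in w' :: p -> z != w.
  move=> zin; apply/negP => /eqP zw.
  have := branch_disj euw' euw w'w (y := w).
  by rewrite branch_root inE -zw (path_connect pp zin) => /(_ isT).
exfalso; move/negP: ynB; apply; rewrite inE; apply/connectP.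
exists (w' :: p) => //; apply: path_avoidI.
- by rewrite /= euw' (path_avoid pp).
- exact: tE_neq.
- by apply/negP => /pw; rewrite eqxx.
Qed.

Lemma path_branch_const u w x p : e u w -> path e x p ->
  (forall q, q \in zip (x :: p) p -> [set q.1; q.2] != [set u; w]) ->
  (x \in branch u w) = (last x p \in branch u w).
Proof.
move=> euw; elim: p x => [//|y p IH] x /= /andP [exy pp] hz.
rewrite -IH //; last by move=> q qin; apply: hz; rewrite inE qin orbT.
have hxy : [set x; y] != [set u; w] by apply: (hz (x, y)); rewrite inE eqxx.
apply/idP/idP => [xB|yB]; apply/negPn/negP => nB.
- have [h1 h2] := branch_exit euw xB exy nB.
  by move: hxy; rewrite h1 h2 setUC eqxx.
- have [h1 h2] := branch_exit euw yB (etrans (tE_sym _ _) exy) nB.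
  by move: hxy; rewrite h1 h2 eqxx.
Qed.

Lemma branch_leafE w z x : e w (phi z) -> (phi x \in branch w (phi z)) = (x == z).
Proof.
move=> ew; apply/idP/eqP => [h|->]; last exact: branch_root.
exact: tphi_inj (branch_leaf ew (deg_leaf z) h).
Qed.

End Tree.

Section Parsimony.
Variables (X : finType) (T : btree X).
Local Notation V := (tV T).
Local Notation e := (tE T).
Local Notation phi := (tphi T).

Definition change_edges (g : {ffun V -> bool}) : {set {set V}} :=
  [set [set p.1; p.2] | p in [set p : (V * V)%type | e p.1 p.2 && (g p.1 != g p.2)]].

Lemma changesE (g : {ffun V -> bool}) : changes g = #|change_edges g|. Proof. by []. Qed.

Lemma changes_le_edges (g : {ffun V -> bool}) : changes g <= #|edges e|.
Proof.
rewrite changesE; apply/subset_leq_card/imsetS.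
by apply/subsetP => p; rewrite !inE => /andP [].
Qed.

Lemma parsimony_le_changes (f : {ffun X -> bool}) (g : {ffun V -> bool}) :
  [forall x, g (phi x) == f x] -> parsimony T f <= changes g.
Proof. by move=> h; apply: bigmin_le; rewrite ?mem_index_enum. Qed.

Definition leaf_nbr (v : V) : V := odflt v [pick w | e v w].

Lemma tE_leaf_nbr x : e (phi x) (leaf_nbr (phi x)).
Proof.
rewrite /leaf_nbr; case: pickP => [//|h].
have := deg_leaf T x; rewrite /deg.
have -> : [set w | e (phi x) w] = set0 by apply/setP => w; rewrite !inE h.
by rewrite cards0.
Qed.

Lemma leaf_edgeE x w : e (phi x) w -> [set phi x; w] = [set phi x; leaf_nbr (phi x)].
Proof. by move=> h; rewrite (leaf_nbr_uniq h (tE_leaf_nbr x)). Qed.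

Definition extend (f : {ffun X -> bool}) (c : {ffun V -> bool}) : {ffun V -> bool} :=
  [ffun v => if [pick x | phi x == v] is Some x then f x else c v].

Lemma extend_leaf (f : {ffun X -> bool}) (c : {ffun V -> bool}) :
  [forall x, extend f c (phi x) == f x].
Proof.
apply/forallP => x; rewrite ffunE; case: pickP => [y /eqP /tphi_inj -> //|/(_ x)].
by rewrite eqxx.
Qed.

(* Recolouring a leaf [x] only affects its pendant edge. *)
Lemma parsimony_le_recolour (f : {ffun X -> bool}) (c : {ffun V -> bool}) :
  parsimony T f <= changes c + #|[set x | f x != c (phi x)]|.
Proof.
set g := extend f c; set S := [set x | f x != c (phi x)].
have gc v : g v != c v -> exists2 x, v = phi x & x \in S.
  rewrite /g ffunE; case: pickP => [y /eqP <- h|_]; last by rewrite eqxx.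
  by exists y; rewrite ?inE.
apply: leq_trans (parsimony_le_changes (extend_leaf f c)) _.
rewrite !changesE.
apply: (@leq_trans #|change_edges c :|: [set [set phi x; leaf_nbr (phi x)] | x in S]|).
  apply/subset_leq_card/subsetP => E /imsetP [[p1 p2]].
  rewrite inE /= => /andP [ep gp] ->; rewrite inE.
  have [cp|cp] := eqVneq (c p1) (c p2); last first.
    by apply/orP; left; apply/imsetP; exists (p1, p2); rewrite // inE /= ep cp.
  apply/orP; right.
  have : (g p1 != c p1) || (g p2 != c p2).
    apply/negPn/negP => /norP [/negPn /eqP h1 /negPn /eqP h2].
    by move: gp; rewrite h1 h2 cp eqxx.
  case/orP => /gc [x def xS]; apply/imsetP; exists x => //; subst.
    exact: leaf_edgeE.
  by rewrite setUC; apply: leaf_edgeE; rewrite tE_sym.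
apply: leq_trans (leq_card_setU _ _).1 _.
by rewrite leq_add2l leq_imset_card.
Qed.

Lemma parsimony_le_count (f : {ffun X -> bool}) (beta : bool) :
  parsimony T f <= #|[set x | f x != beta]|.
Proof.
apply: leq_trans (parsimony_le_recolour f [ffun _ => beta]) _.
have -> : changes [ffun _ : V => beta] = 0.
  apply/eqP; rewrite changesE cards_eq0; apply/eqP/setP => E.
  by rewrite inE; apply/negP => /imsetP [p]; rewrite inE !ffunE eqxx andbF.
by apply/subset_leq_card/subsetP => x; rewrite !inE ffunE.
Qed.

Lemma count_neq_true_false (f : {ffun X -> bool}) :
  #|[set x | f x != true]| + #|[set x | f x != false]| = #|X|.
Proof.
rewrite -(cardsC [set x | f x != true]); congr (_ + _).
by apply: eq_card => x; rewrite !inE; case: (f x).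
Qed.

Lemma parsimony_le_half (f : {ffun X -> bool}) k : #|X| = 2 * k -> parsimony T f <= k.
Proof.
move=> hX; have := count_neq_true_false f; rewrite hX.
case: (leqP #|[set x | f x != true]| k) => h.
  by move=> _; apply: leq_trans (parsimony_le_count f true) h.
by move=> hc; apply: leq_trans (parsimony_le_count f false) _; lia.
Qed.

Lemma path_change_edge (g : {ffun V -> bool}) x p : path e x p -> g x != g (last x p) ->
  exists2 q, q \in zip (x :: p) p & e q.1 q.2 && (g q.1 != g q.2).
Proof.
elim: p x => [/= x _|y p IH x]; first by rewrite eqxx.
rewrite /= => /andP [exy pp] gxl.
have [gxy|gxy] := eqVneq (g x) (g y); last by exists (x, y); rewrite ?inE ?eqxx //= exy gxy.
have gyl : g y != g (last y p) by rewrite -gxy.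
have [q qin hq] := IH y pp gyl.
by exists q => //; rewrite inE qin orbT.
Qed.

End Parsimony.

Definition pvertex (X : finType) (T : btree X) (x : X) (s : seq (tV T)) (t : nat) : tV T :=
  nth (tphi T x) (tphi T x :: s) t.

Section LeafPath.
Variables (X : finType) (T : btree X) (x y : X) (s : seq (tV T)).
Hypothesis lp : leaf_path T x y s.
Local Notation e := (tE T).
Local Notation phi := (tphi T).
Local Notation v := (pvertex x s).
Local Notation m := (size s).

Lemma leaf_path_neq : x != y. Proof. by case/and4P: lp. Qed.
Lemma leaf_path_path : path e (phi x) s. Proof. by case/and4P: lp. Qed.
Lemma leaf_path_last : last (phi x) s = phi y. Proof. by case/and4P: lp => _ _ /eqP. Qed.

Lemma leaf_path_size : 0 < m.
Proof. by case: s leaf_path_last leaf_path_neq => [/= /tphi_inj ->|//]; rewrite eqxx. Qed.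

Lemma pvertex0 : v 0 = phi x. Proof. by []. Qed.

Lemma pvertex_last : v m = phi y.
Proof. by rewrite /pvertex -leaf_path_last -[m]/((size (phi x :: s)).-1) nth_last. Qed.

Lemma tE_pvertex t : t < m -> e (v t) (v t.+1).
Proof. by move=> ht; move/pathP: leaf_path_path => /(_ (phi x) t ht). Qed.

Lemma tE_pvertex_pred t : 0 < t <= m -> e (v t) (v t.-1).
Proof. by case: t => // t /= tm; rewrite tE_sym tE_pvertex. Qed.

Lemma pvertex_neq t1 t2 : t1 <= m -> t2 <= m -> t1 != t2 -> v t1 != v t2.
Proof.
move=> h1 h2; apply: contraNneq => /eqP.
have us : uniq (phi x :: s) by case/and4P: lp.
by rewrite /pvertex nth_uniq.
Qed.

Lemma pvertex_edge t : t < m -> [set v t; v t.+1] \in path_edges (phi x) s.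
Proof.
move=> ht; rewrite /path_edges inE; apply/mapP.
by exists (v t, v t.+1) => //; apply: mem_zip_nth.
Qed.

Lemma pvertex_connect c i d : i + d <= m -> c <= m -> ~~ (i <= c <= i + d) ->
  connect (avoid (v c)) (v i) (v (i + d)).
Proof.
elim: d => [|d IH] hm hc hn; first by rewrite addn0 connect0.
apply: connect_trans (IH _ hc _) _; [lia | by apply: contra hn; lia |].
apply: connect1; rewrite avoidE addnS tE_pvertex ?pvertex_neq //; lia.
Qed.

Lemma pvertex_interior t : 0 < t < m -> v t \notin codom phi /\
  exists z, [/\ e (v t) z, z != v t.-1, z != v t.+1 &
     forall w, e (v t) w -> [|| w == v t.-1, w == v t.+1 | w == z]].
Proof.
move=> /andP [t0 tm]; set N := [set w | e (v t) w].
have ha : v t.-1 \in N by rewrite inE tE_pvertex_pred // t0 ltnW.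
have hb : v t.+1 \in N by rewrite inE tE_pvertex.
have hab : v t.-1 != v t.+1 by apply: pvertex_neq; lia.
have d3 : #|N| = 3.
  have : 2 <= #|N|.
    have := cards2 (v t.-1) (v t.+1); rewrite hab => <-.
    by rewrite subset_leq_card // subUset !sub1set ha hb.
  by have := deg_neq2 (v t); have := deg_le3 (v t); rewrite /deg -/N; lia.
split; first by rewrite -deg_eq1 /deg -/N d3.
have : #|N :\ v t.-1 :\ v t.+1| = 1.
  move: d3; rewrite (cardsD1 (v t.-1)) ha (cardsD1 (v t.+1) (N :\ _)) !inE eq_sym hab.
  by rewrite tE_pvertex //=; lia.
move/eqP/cards1P => [z hz].
have : z \in N :\ v t.-1 :\ v t.+1 by rewrite hz set11.
rewrite !inE => /and3P [zb za ez]; exists z; split=> // w ew.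
have [//|wa] := eqVneq w (v t.-1); have [//|wb] := eqVneq w (v t.+1).
have : w \in N :\ v t.-1 :\ v t.+1 by rewrite !inE wa wb ew.
by rewrite hz inE => ->; rewrite !orbT.
Qed.

Lemma leaf_path_end z : z \in [set x; y] ->
  exists2 w, e (phi z) w & [set phi z; w] \in path_edges (phi x) s.
Proof.
have m0 := leaf_path_size.
case/set2P => ->; first by exists (v 1); [exact: (tE_pvertex m0) | exact: (pvertex_edge m0)].
exists (v m.-1); rewrite -pvertex_last.
  by rewrite tE_pvertex_pred // m0 leqnn.
by rewrite setUC -{2}(prednK m0) pvertex_edge // prednK.
Qed.

End LeafPath.

Section PathSystem.
Variables (X : finType) (T : btree X) (k : nat) (a b : 'I_k -> X) (s : 'I_k -> seq (tV T)).
Hypothesis hps : path_system T a b s.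
Local Notation V := (tV T).
Local Notation e := (tE T).
Local Notation phi := (tphi T).
Local Notation PE i := (path_edges (phi (a i)) (s i)).

Lemma path_system_leaf_path i : leaf_path T (a i) (b i) (s i). Proof. by case: hps. Qed.

Lemma path_system_disj i j : i != j -> [disjoint PE i & PE j].
Proof. by case: hps => _; apply. Qed.

(* Distinct paths cannot share an end: both would use its unique pendant edge. *)
Lemma path_system_end_uniq z i j : z \in [set a i; b i] -> z \in [set a j; b j] -> i = j.
Proof.
move=> hi hj; apply/eqP/negPn/negP => nij.
have [w1 e1 h1] := leaf_path_end (path_system_leaf_path i) hi.
have [w2 e2 h2] := leaf_path_end (path_system_leaf_path j) hj.
by move: (disjointFr (path_system_disj nij) h1); rewrite (leaf_nbr_uniq e1 e2) h2.
Qed.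

Lemma path_system_perfect_matching : #|X| = 2 * k -> perfect_matching a b.
Proof.
move=> hX.
have ab i : a i != b i by exact: leaf_path_neq (path_system_leaf_path i).
have a_inj : injective a by move=> i j h; apply: (@path_system_end_uniq (a i)); rewrite ?h set21.
have b_inj : injective b by move=> i j h; apply: (@path_system_end_uniq (b i)); rewrite ?h set22.
have AB : [disjoint [set a i | i : 'I_k] & [set b i | i : 'I_k]].
  rewrite -setI_eq0; apply/eqP/setP => z; rewrite !inE.
  apply/andP => [[/imsetP [i _ ->] /imsetP [j _ h]]].
  have ij : i = j by apply: (@path_system_end_uniq (a i)); rewrite ?h ?set21 ?set22.
  by move: (ab i); rewrite h ij eqxx.
have ABT : [set a i | i : 'I_k] :|: [set b i | i : 'I_k] = setT.
  apply/eqP; rewrite eqEcard subsetT cardsT hX.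
  move: AB; rewrite -(leq_card_setU [set a i | i : 'I_k] _).2 => /eqP ->.
  by rewrite !card_imset ?card_ord //; lia.
split=> // [z|]; last exact: path_system_end_uniq.
have : z \in [set a i | i : 'I_k] :|: [set b i | i : 'I_k] by rewrite ABT.
by rewrite inE => /orP [] /imsetP [i _ ->]; exists i; rewrite ?set21 ?set22.
Qed.

(* Each path of the system carries its own change edge. *)
Lemma changes_ge_separates (f : {ffun X -> bool}) (g : {ffun V -> bool}) :
  separates f a b -> [forall x, g (phi x) == f x] -> k <= changes g.
Proof.
move=> /forallP sep /forallP gf.
have hex i : exists E, (E \in PE i) && (E \in change_edges g).
  have lp := path_system_leaf_path i.
  have gl : g (phi (a i)) != g (last (phi (a i)) (s i)).
    by rewrite (leaf_path_last lp) (eqP (gf _)) (eqP (gf _)) sep.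
  have [[q1 q2] qin /andP [eq gq]] := path_change_edge (leaf_path_path lp) gl.
  exists [set q1; q2]; rewrite inE; apply/andP; split; first by apply/mapP; exists (q1, q2).
  by apply/imsetP; exists (q1, q2); rewrite // inE /= eq gq.
have [ch hch] := fin_all_exists hex.
have ch_inj : injective ch.
  move=> i j hij; apply/eqP/negPn/negP => nij.
  have /andP [hi _] := hch i; have /andP [hj _] := hch j.
  by move: (disjointFr (path_system_disj nij) hi); rewrite hij hj.
rewrite changesE -[k]card_ord -(card_imset _ ch_inj); apply/subset_leq_card/subsetP.
by move=> E /imsetP [i _ ->]; have /andP [] := hch i.
Qed.

Lemma parsimony_ge_separates (f : {ffun X -> bool}) : separates f a b -> k <= parsimony T f.
Proof.
move=> sep; apply: (big_ind (fun n => k <= n)).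
- exact: leq_trans (changes_ge_separates sep (extend_leaf f [ffun _ => false]))
    (changes_le_edges _).
- by move=> m n hm hn; rewrite leq_min hm hn.
- by move=> g; apply: changes_ge_separates.
Qed.

End PathSystem.

Section Imbalance.
Variables (X : finType) (T : btree X) (f : {ffun X -> bool}).
Local Notation V := (tV T).
Local Notation e := (tE T).
Local Notation phi := (tphi T).

Definition spin x : int := if f x then 1%R else (-1)%R.

Definition imbalance (A : {set V}) : int := (\sum_x (if phi x \in A then spin x else 0))%R.

Lemma imbalance_compl (A A' : {set V}) : (forall x, (phi x \in A) = (phi x \notin A')) ->
  imbalance A = (\sum_x spin x - imbalance A')%R.
Proof.
move=> h; rewrite /imbalance -sumrB; apply: eq_bigr => x _; rewrite h.
by case: (phi x \in A'); rewrite ?subrr ?subr0.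
Qed.

Lemma changes_branch (u w : V) (al : bool) : e u w ->
  changes [ffun v => (v \in branch u w) == al] <= 1.
Proof.
move=> euw; rewrite changesE -(cards1 [set u; w]); apply/subset_leq_card/subsetP.
move=> E /imsetP [[p1 p2]]; rewrite inE /= !ffunE => /andP [ep cp] ->; rewrite inE.
case: (boolP (p1 \in branch u w)) => h1; case: (boolP (p2 \in branch u w)) => h2.
- by move: cp; rewrite h1 h2 eqxx.
- by have [-> ->] := branch_exit euw h1 ep h2; rewrite setUC.
- by have [-> ->] := branch_exit euw h2 (etrans (tE_sym _ _) ep) h1.
- by move: cp; rewrite (negbTE h1) (negbTE h2) eqxx.
Qed.

(* Colour [branch u w] with the majority there and the rest with the other
   colour: one change edge, and at most [k - 2] leaves to recolour. *)
Lemma parsimony_lt_heavy_branch k (u w : V) : e u w ->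
  #|[set x | f x != true]| = k -> #|[set x | f x != false]| = k ->
  (2 <= imbalance (branch u w) \/ imbalance (branch u w) <= -2)%R -> parsimony T f < k.
Proof.
move=> euw N1 N2 hd.
have mismatch (al : bool) :
  (#|[set x | f x != [ffun v => (v \in branch u w) == al] (phi x)]|%:R : int) =
  (if al then #|[set x | f x != false]|%:R - imbalance (branch u w) else
              #|[set x | f x != true]|%:R + imbalance (branch u w))%R.
  rewrite !natr_card_set /imbalance; case: al; [rewrite -sumrB | rewrite -big_split];
  by apply: eq_bigr => x _; rewrite ffunE /spin; case: (f x); case: (phi x \in _).
case: hd => hd.
- have := mismatch true; have := changes_branch true euw.
  have := parsimony_le_recolour f [ffun v => (v \in branch u w) == true].
  by rewrite N2; lia.
- have := mismatch false; have := changes_branch false euw.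
  have := parsimony_le_recolour f [ffun v => (v \in branch u w) == false].
  by rewrite N1; lia.
Qed.

End Imbalance.

Section HeavyBranch.
Variables (X : finType) (T : btree X) (k : nat) (a b : 'I_k -> X) (s : 'I_k -> seq (tV T)).
Hypotheses (hps : path_system T a b s) (pm : perfect_matching a b).
Variables (f : {ffun X -> bool}) (i : 'I_k).
Hypotheses (fab : f (a i) = f (b i)) (balanced : (\sum_x spin f x = 0)%R).
Local Notation e := (tE T).
Local Notation phi := (tphi T).
Local Notation PE j := (path_edges (phi (a j)) (s j)).
Local Notation v := (pvertex (a i) (s i)).
Local Notation m := (size (s i)).
Local Notation p t := (imbalance f (branch (v t.+1) (v t))).

Let lp := path_system_leaf_path hps i.
Let m0 : 0 < m := leaf_path_size lp.

Lemma imbalance_path_first : p 0 = spin f (a i).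
Proof.
have ea : e (v 1) (phi (a i)) by rewrite tE_sym (tE_pvertex lp m0).
rewrite /imbalance (bigD1 (a i)) //= branch_leafE // eqxx big1 ?addr0 // => x.
by rewrite branch_leafE // => /negbTE ->.
Qed.

Lemma imbalance_path_last : p m.-1 = (- spin f (a i))%R.
Proof.
have eb : e (v m.-1) (phi (b i)).
  by rewrite -(pvertex_last lp) tE_sym (tE_pvertex_pred lp) // m0 leqnn.
rewrite prednK // (pvertex_last lp) (@imbalance_compl _ _ _ _ (branch (v m.-1) (phi (b i)))).
  rewrite balanced sub0r /imbalance (bigD1 (b i)) //= branch_leafE // eqxx.
  rewrite big1 ?addr0 /spin ?fab // => x.
  by rewrite branch_leafE // => /negbTE ->.
by move=> x; rewrite branchC // tE_sym.
Qed.

(* Every other path lies on one side of the edge, contributing an even amount. *)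
Lemma imbalance_path_odd t : t < m -> exists M : int, p t = (spin f (a i) + 2 * M)%R.
Proof.
move=> ht; have eB : e (v t.+1) (v t) by rewrite tE_sym (tE_pvertex lp).
set Bt := branch (v t.+1) (v t).
have ai : phi (a i) \in Bt.
  rewrite inE -(pvertex0 (a i) (s i)) (sym_connect_sym (@avoid_sym _ _ _)).
  have := pvertex_connect lp (c := t.+1) (i := 0) (d := t); rewrite add0n; apply; lia.
have bi : phi (b i) \notin Bt.
  rewrite -(pvertex_last lp); case: (ltnP t.+1 m) => h; last first.
    have -> : m = t.+1 by lia.
    exact: branch_notin eB.
  have e2 : e (v t.+1) (v t.+2) by apply: (tE_pvertex lp).
  have hin : v m \in branch (v t.+1) (v t.+2).
    rewrite inE; have := pvertex_connect lp (c := t.+1) (i := t.+2) (d := m - t.+2).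
    by rewrite subnKC //; apply; lia.
  by rewrite (branch_disj e2 eB _ hin) // (pvertex_neq lp); lia.
have side j : j != i -> (phi (a j) \in Bt) = (phi (b j) \in Bt).
  move=> ji; rewrite -(leaf_path_last (path_system_leaf_path hps j)).
  apply: path_branch_const eB (leaf_path_path (path_system_leaf_path hps j)) _.
  move=> q qin; apply/negP => /eqP hq.
  have h1 : [set q.1; q.2] \in PE j by rewrite inE; apply/mapP; exists q.
  have h2 : [set v t.+1; v t] \in PE i by rewrite setUC; apply: pvertex_edge.
  by move: (disjointFr (path_system_disj hps ji) h1); rewrite hq h2.
pose half j : int :=
  (if f (a j) && f (b j) then 1 else if ~~ f (a j) && ~~ f (b j) then -1 else 0)%R.
exists (\sum_(j | j != i) (if phi (a j) \in Bt then half j else 0))%R.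
rewrite /imbalance (perfect_matching_sum _ pm) (bigD1 i) //= ai (negbTE bi) addr0.
congr (_ + _)%R; rewrite mulr_sumr; apply: eq_bigr => j ji; rewrite -(side j ji) /half /spin.
by case: (phi (a j) \in Bt); case: (f (a j)); case: (f (b j)); rewrite ?mulr0 ?addr0.
Qed.

(* At the interior vertex [v t.+1] the three branches partition the leaves. *)
Lemma imbalance_path_step t : t.+1 < m ->
  exists2 z, e (v t.+1) z & imbalance f (branch (v t.+1) z) = (p t.+1 - p t)%R.
Proof.
move=> ht; have [nc [z [ez z1 z2 hz]]] := pvertex_interior lp (t := t.+1) (ltac:(lia)).
rewrite /= in z1 hz; exists z => //.
have e1 : e (v t.+1) (v t) by rewrite tE_sym (tE_pvertex lp) //; lia.
have e2 : e (v t.+1) (v t.+2) by apply: (tE_pvertex lp).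
have d12 : v t != v t.+2 by rewrite (pvertex_neq lp); lia.
have part : (\sum_x spin f x = p t + imbalance f (branch (v t.+1) (v t.+2))
                 + imbalance f (branch (v t.+1) z))%R.
  rewrite /imbalance -!big_split; apply: eq_bigr => x _ /=.
  have xw : phi x != v t.+1 by apply/eqP => h; move: nc; rewrite -h codom_f.
  have [w' ew' hin] := branch_cover xw.
  case/or3P: (hz w' ew') => /eqP hw; subst w'.
  - by rewrite hin (branch_disj e1 e2 d12 hin) (branch_disj e1 ez _ hin) ?addr0 // eq_sym.
  - by rewrite hin (branch_disj e2 e1 _ hin) ?(branch_disj e2 ez _ hin)
      ?addr0 ?add0r // eq_sym.
  - by rewrite hin (branch_disj ez e1 z1 hin) (branch_disj ez e2 z2 hin) ?add0r.
have hc : p t.+1 = (\sum_x spin f x - imbalance f (branch (v t.+1) (v t.+2)))%R.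
  by apply: imbalance_compl => x; rewrite branchC // tE_sym.
by move: part hc; rewrite balanced; lia.
Qed.

Lemma heavy_branch_exists : exists u w, e u w /\
  (2 <= imbalance f (branch u w) \/ imbalance f (branch u w) <= -2)%R.
Proof.
have hsg : (spin f (a i) = 1 \/ spin f (a i) = -1)%R.
  by rewrite /spin; case: (f (a i)); [left|right].
case: (boolP [exists t : 'I_m, (2 <= p t)%R || (p t <= -2)%R]).
  case/existsP => t /orP h; exists (v t.+1), (v t); split; last by case: h; [left|right].
  by rewrite tE_sym (tE_pvertex lp).
rewrite negb_exists => /forallP small.
have unit t : t <= m.-1 -> p t = 1%R \/ p t = (-1)%R.
  move=> ht; have tm : t < m by lia.
  have := small (Ordinal tm); rewrite /= negb_or -!real_ltNge ?num_real // => /andP [h1 h2].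
  have [M hM] := imbalance_path_odd tm; lia.
have [t [tn h1 h2]] := sign_change hsg imbalance_path_first imbalance_path_last unit.
have [z ez hz] := imbalance_path_step (t := t) (ltac:(lia)).
by exists (v t.+1), z; split => //; rewrite hz h1 h2; lia.
Qed.

End HeavyBranch.

Section Characterisation.
Variables (X : finType) (T : btree X) (k : nat) (a b : 'I_k -> X) (s : 'I_k -> seq (tV T)).
Hypotheses (hX : #|X| = 2 * k) (hps : path_system T a b s).

Lemma parsimony_lt_not_separated (f : {ffun X -> bool}) i :
  f (a i) = f (b i) -> parsimony T f < k.
Proof.
move=> fab; have := count_neq_true_false f; rewrite hX.
set N1 := #|[set x | f x != true]|; set N2 := #|[set x | f x != false]| => hc.
case: (ltnP N1 k) => h1; first exact: leq_ltn_trans (parsimony_le_count T f true) _.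
case: (ltnP N2 k) => h2; first exact: leq_ltn_trans (parsimony_le_count T f false) _.
have e1 : N1 = k by lia.
have e2 : N2 = k by lia.
have balanced : (\sum_x spin f x = 0)%R.
  have -> : (\sum_x spin f x = (N2%:R : int) - N1%:R)%R.
    by rewrite !natr_card_set -sumrB; apply: eq_bigr => x _; rewrite /spin; case: (f x).
  by rewrite e1 e2 subrr.
have pm := path_system_perfect_matching hps hX.
have [u [w [euw hd]]] := heavy_branch_exists hps pm fab balanced.
exact: parsimony_lt_heavy_branch euw e1 e2 hd.
Qed.

Lemma A_separating : A_ T k = [set f : {ffun X -> bool} | separates f a b].
Proof.
apply/setP => f; rewrite !inE; apply/eqP/forallP => [hk i|sep].
  by apply/negP => /eqP /parsimony_lt_not_separated; rewrite hk ltnn.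
by apply/eqP; rewrite eqn_leq parsimony_le_half // (parsimony_ge_separates hps) //; apply/forallP.
Qed.

End Characterisation.

Theorem proposition5 (k : nat) (X : finType) (T T' : btree X)
    (a b : 'I_k -> X) (s : 'I_k -> seq (tV T))
    (a' b' : 'I_k -> X) (s' : 'I_k -> seq (tV T')) :
  1 <= k -> #|X| = 2 * k ->
  path_system T a b s -> path_system T' a' b' s' ->
  (A_ T k = A_ T' k <-> endpoint_pairs a b = endpoint_pairs a' b').
Proof.
move=> _ hX hps hps'.
have pm := path_system_perfect_matching hps hX.
have pm' := path_system_perfect_matching hps' hX.
rewrite (A_separating hX hps) (A_separating hX hps'); split => [/setP sepE|hE].
  apply/eqP; rewrite eqEsubset !endpoint_pairs_sub // => f;
  by have := sepE f; rewrite !inE => ->.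
by apply/setP => f; rewrite !inE !separatesE hE.
Qed.
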